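(* Let $C_{\mathbb S}>0$ and $\mathbb{S}^d=\{x\in\mathbb{R}^{d+1}:\langle x,x\rangle=C_{\mathbb S}^{-1}\}$. Let $p\in\mathbb{S}^d$, $w\in T_p\mathbb{S}^d=p^{\perp}$, and let $H_{p,w}=\{x\in\mathbb{S}^d:\langle w,x\rangle=0\}$. If $\langle w,w\rangle=C_{\mathbb S}$, then for all $x\in\mathbb{S}^d$, $$\min_{y\in H_{p,w}}d(x,y)=\frac{1}{\sqrt{C_{\mathbb S}}}\,\mathrm{asin}\,|\langle w,x\rangle|=\frac{1}{\sqrt{C_{\mathbb S}}}\,\big|g_{p_\circ}(w,\log_{p_\circ}(x))\big|,$$ where $p_\circ=C_{\mathbb S}^{-1/2}\|P_w^\perp x\|^{-1}P_w^\perp x\in H_{p,w}$ and $P_w^\perp x=x-\frac{\langle x,w\rangle}{\langle w,w\rangle}w$.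
   Context: $\langle\cdot,\cdot\rangle$ is the standard dot product and $\|\cdot\|$ the Euclidean norm. On $\mathbb{S}^d$ the Riemannian metric is $g_q(u,v)=\langle u,v\rangle$ for $u,v\in T_q\mathbb{S}^d=q^\perp$; the geodesic distance is $d(x,q)=\frac{1}{\sqrt{C_{\mathbb S}}}\mathrm{acos}(C_{\mathbb S}\langle x,q\rangle)$; the logarithmic map is $\log_q(x)=\frac{\theta}{\sin\theta}(x-q\cos\theta)$ with $\theta=\sqrt{C_{\mathbb S}}\,d(x,q)$. *)

From HB Require Import structures.
From mathcomp Require Import all_boot all_order all_algebra.
From mathcomp Require Import all_classical all_reals all_analysis.
Set Implicit Arguments. Unset Strict Implicit. Unset Printing Implicit Defensive.
Import Order.TTheory GRing.Theory Num.Theory.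
Local Open Scope ring_scope.

Definition dot {R : realType} {n : nat} (u v : 'rV[R]_n) : R :=
  \sum_(i < n) u 0 i * v 0 i.

Definition enorm {R : realType} {n : nat} (u : 'rV[R]_n) : R := Num.sqrt (dot u u).

Definition on_sphere {R : realType} {n : nat} (C : R) (x : 'rV[R]_n) : Prop :=
  dot x x = C^-1.

Definition geod {R : realType} {n : nat} (C : R) (x q : 'rV[R]_n) : R :=
  (Num.sqrt C)^-1 * acos (C * dot x q).

Definition logmap {R : realType} {n : nat} (C : R) (q x : 'rV[R]_n) : 'rV[R]_n :=
  let theta := Num.sqrt C * geod C x q in
  (theta / sin theta) *: (x - cos theta *: q).

Definition Hpw {R : realType} {n : nat} (C : R) (w : 'rV[R]_n) : set 'rV[R]_n :=
  [set x | on_sphere C x /\ dot w x = 0].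

Definition Pperp {R : realType} {n : nat} (w x : 'rV[R]_n) : 'rV[R]_n :=
  x - (dot x w / dot w w) *: w.

Definition pcirc {R : realType} {n : nat} (C : R) (w x : 'rV[R]_n) : 'rV[R]_n :=
  ((Num.sqrt C)^-1 * (enorm (Pperp w x))^-1) *: Pperp w x.

From HB Require Import structures.
From mathcomp Require Import all_boot all_order all_algebra.
From mathcomp Require Import all_classical all_reals all_analysis.
From mathcomp Require Import ring.
Import Order.TTheory GRing.Theory Num.Theory.
Set Implicit Arguments.
Unset Strict Implicit.
Unset Printing Implicit Defensive.

Local Open Scope ring_scope.

(* Write a := <w,x> and P := P_w^perp x, so x = P + (a/C) w and C |P|^2 = 1 - a^2.
   For y in H_{p,w}, <x,y> = <P,y>, hence by Cauchy-Schwarz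
   C <x,y> <= sqrt C |P| = sqrt (1 - a^2), with equality at y = p_o (and for
   every y when P = 0).  Since acos is decreasing, the minimal distance is
   C^{-1/2} acos (sqrt (1 - a^2)) = C^{-1/2} asin |a|.  Finally <w, log_{p_o} x>
   = (theta / sin theta) a with theta = asin |a|, whose absolute value is theta
   because sin theta = |a|. *)

Section DotProduct.
Variables (R : realType) (n : nat).
Implicit Types u v z : 'rV[R]_n.

Lemma dotC u v : dot u v = dot v u.
Proof. by apply: eq_bigr => i _; rewrite mulrC. Qed.

Lemma dotDl u v z : dot (u + v) z = dot u z + dot v z.
Proof. by rewrite /dot -big_split; apply: eq_bigr => i _; rewrite mxE mulrDl. Qed.

Lemma dotZl k u z : dot (k *: u) z = k * dot u z.
Proof. by rewrite /dot mulr_sumr; apply: eq_bigr => i _; rewrite mxE mulrA. Qed.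

Lemma dotBl u v z : dot (u - v) z = dot u z - dot v z.
Proof. by rewrite dotDl -scaleN1r dotZl mulN1r. Qed.

Lemma dotZr k u z : dot z (k *: u) = k * dot z u.
Proof. by rewrite dotC dotZl dotC. Qed.

Lemma dotBr u v z : dot z (u - v) = dot z u - dot z v.
Proof. by rewrite dotC dotBl !(dotC z). Qed.

Lemma dot0l u : dot 0 u = 0.
Proof. by rewrite -(scale0r 0) dotZl mul0r. Qed.

Lemma dot_ge0 u : 0 <= dot u u.
Proof. by rewrite sumr_ge0 // => i _; rewrite -expr2 sqr_ge0. Qed.

Lemma dot_eq0 u : (dot u u == 0) = (u == 0).
Proof.
apply/idP/eqP => [|->]; last by rewrite dot0l.
rewrite psumr_eq0 => [/allP u0|i _]; last by rewrite -expr2 sqr_ge0.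
apply/matrixP => i j; rewrite ord1 mxE.
by have /= := u0 j (mem_index_enum j); rewrite mulf_eq0 orbb => /eqP.
Qed.

Lemma enorm_ge0 u : 0 <= enorm u.
Proof. exact: sqrtr_ge0. Qed.

Lemma sqr_enorm u : enorm u ^+ 2 = dot u u.
Proof. by rewrite sqr_sqrtr ?dot_ge0. Qed.

Lemma enorm_eq0 u : (enorm u == 0) = (u == 0).
Proof. by rewrite sqrtr_eq0 -dot_eq0 eq_le dot_ge0 andbT. Qed.

Lemma dot_le_enorm u v : dot u v <= enorm u * enorm v.
Proof.
have [->|u0] := eqVneq u 0; first by rewrite dot0l mulr_ge0 ?enorm_ge0.
have [->|v0] := eqVneq v 0; first by rewrite dotC dot0l mulr_ge0 ?enorm_ge0.
have uv0 : 0 < enorm u * enorm v.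
  by rewrite mulr_gt0 // lt0r enorm_ge0 enorm_eq0 ?u0 ?v0.
have expand : dot (enorm v *: u - enorm u *: v) (enorm v *: u - enorm u *: v)
    = 2 * (enorm u * enorm v) * (enorm u * enorm v - dot u v).
  by rewrite !(dotBl, dotBr, dotZl, dotZr) -!sqr_enorm (dotC v u); ring.
have := dot_ge0 (enorm v *: u - enorm u *: v); rewrite expand.
by rewrite pmulr_rge0 ?subr_ge0 // mulr_gt0.
Qed.

Lemma normr_dot_le u v : `|dot u v| <= enorm u * enorm v.
Proof.
rewrite ler_norml dot_le_enorm andbT lerNl -mulN1r -dotZl.
apply: le_trans (dot_le_enorm _ _) _.
by rewrite /enorm dotZl dotZr !mulN1r opprK.
Qed.

End DotProduct.

Lemma ler_acos (R : realType) (a b : R) :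
  -1 <= a <= 1 -> -1 <= b <= 1 -> a <= b -> acos b <= acos a.
Proof.
move=> a1 b1 ab; rewrite leNgt; apply/negP => lt_ab.
have := lt_ab; rewrite -ltr_cos ?in_itv /= ?acos_ge0 ?acos_lepi // !acosK ?in_itv //.
by rewrite ltNge ab.
Qed.

Section SqrtOneMinusSquare.
Variables (R : realType) (a : R).
Hypothesis a1 : `|a| <= 1.
Let s := Num.sqrt (1 - a ^+ 2).

Lemma sqrt1B_sqr_itv : -1 <= s <= 1.
Proof.
have s0 : 0 <= s := sqrtr_ge0 _.
rewrite (le_trans _ s0) ?lerN10 //= -sqrtr1 ler_sqrt ?ler01 //.
by rewrite lerBlDr lerDl sqr_ge0.
Qed.

Lemma sin_acos_sqrt1B_sqr : sin (acos s) = `|a|.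
Proof.
rewrite sin_acos ?sqrt1B_sqr_itv // sqr_sqrtr; last first.
  by rewrite subr_ge0 -real_normK ?num_real // expr_le1.
by rewrite opprB addrC subrK sqrtr_sqr.
Qed.

Lemma asin_norm : asin `|a| = acos s.
Proof.
have s_itv := sqrt1B_sqr_itv.
have acos_pi2 : acos s <= pi / 2.
  by rewrite -acos0 ler_acos ?lerN10 ?ler01 // sqrtr_ge0.
have acos_ge0 : 0 <= acos s := acos_ge0 s_itv.
rewrite -sin_acos_sqrt1B_sqr sinK // in_itv /= acos_pi2 andbT.
by rewrite (le_trans _ acos_ge0) // oppr_le0 divr_ge0 ?pi_ge0.
Qed.

End SqrtOneMinusSquare.

Section Projection.
Variables (R : realType) (n : nat) (w : 'rV[R]_n).
Implicit Types x y : 'rV[R]_n.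

Lemma dot_Pperp_orth x y : dot w y = 0 -> dot (Pperp w x) y = dot x y.
Proof. by move=> wy; rewrite dotBl dotZl dotC wy mulr0 subr0. Qed.

Hypothesis w0 : dot w w != 0.

Lemma dot_Pperp x : dot w (Pperp w x) = 0.
Proof. by rewrite dotBr dotZr divfK // dotC subrr. Qed.

Lemma dot_Pperp_self x :
  dot (Pperp w x) (Pperp w x) = dot x x - dot x w ^+ 2 / dot w w.
Proof.
set P := Pperp w x; have Pw : dot P w = 0 by rewrite dotC dot_Pperp.
rewrite {2}/P /Pperp dotBr dotZr Pw mulr0 subr0.
by rewrite /P /Pperp dotBl dotZl (dotC w) mulrAC -expr2.
Qed.

End Projection.

Section Sphere.
Variables (R : realType) (n : nat) (C : R).
Hypothesis C0 : 0 < C.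
Implicit Types x y q w : 'rV[R]_n.

Let sqrtC_neq0 : Num.sqrt C != 0.
Proof. by rewrite gt_eqF ?sqrtr_gt0. Qed.

Let sqr_sqrtC : Num.sqrt C ^+ 2 = C.
Proof. by rewrite sqr_sqrtr ?ltW. Qed.

Let divr_sqrtC : C / Num.sqrt C = Num.sqrt C.
Proof. by rewrite -{1}sqr_sqrtC expr2 mulfK. Qed.

Lemma enorm_sphere x : on_sphere C x -> enorm x = (Num.sqrt C)^-1.
Proof. by move=> hx; rewrite /enorm hx sqrtrV ?ltW. Qed.

Lemma normr_dot_sphere x y : on_sphere C x -> on_sphere C y -> `|C * dot x y| <= 1.
Proof.
move=> hx hy; rewrite normrM gtr0_norm //.
apply: le_trans (ler_wpM2l (ltW C0) (normr_dot_le x y)) _.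
by rewrite !enorm_sphere // -invfM -expr2 sqr_sqrtC mulfV ?gt_eqF.
Qed.

Lemma dot_orth_le_enorm_Pperp x y w : on_sphere C y -> dot w y = 0 ->
  C * dot x y <= Num.sqrt C * enorm (Pperp w x).
Proof.
move=> hy wy; rewrite -(dot_Pperp_orth x wy).
apply: le_trans (ler_wpM2l (ltW C0) (dot_le_enorm _ _)) _.
by rewrite (enorm_sphere hy) mulrCA divr_sqrtC mulrC.
Qed.

Lemma sqrtC_enorm_Pperp x w : on_sphere C x -> dot w w = C ->
  Num.sqrt C * enorm (Pperp w x) = Num.sqrt (1 - dot w x ^+ 2).
Proof.
move=> hx hw; rewrite /enorm -sqrtrM ?ltW // dot_Pperp_self ?hw ?gt_eqF // hx.
by rewrite (dotC x) mulrBr mulfV ?gt_eqF // mulrCA mulfV ?gt_eqF ?mulr1.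
Qed.

Lemma dot_logmap x q w : dot w q = 0 ->
  dot w (logmap C q x)
  = acos (C * dot x q) / sin (acos (C * dot x q)) * dot w x.
Proof.
by move=> wq; rewrite /logmap /geod mulVKf // dotZr dotBr dotZr wq mulr0 subr0.
Qed.

Section PolarPoint.
Variables x w : 'rV[R]_n.
Hypotheses (w0 : dot w w != 0) (P0 : Pperp w x != 0).

Let enorm_P_neq0 : enorm (Pperp w x) != 0.
Proof. by rewrite enorm_eq0. Qed.

Lemma pcirc_Hpw : Hpw C w (pcirc C w x).
Proof.
split; last by rewrite /pcirc dotZr dot_Pperp ?mulr0.
rewrite /on_sphere /pcirc dotZl dotZr -sqr_enorm -[in RHS]sqr_sqrtC.
by field; rewrite sqrtC_neq0 enorm_P_neq0.
Qed.

Lemma dot_pcirc : C * dot x (pcirc C w x) = Num.sqrt C * enorm (Pperp w x).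
Proof.
rewrite /pcirc dotZr -(dot_Pperp_orth x (dot_Pperp w0 x)) -sqr_enorm.
by rewrite -[C in C * _]sqr_sqrtC; field; rewrite sqrtC_neq0 enorm_P_neq0.
Qed.

End PolarPoint.

End Sphere.

Theorem proposition1 (R : realType) (d : nat) (C : R) (p w : 'rV[R]_(d.+1)) :
  0 < C ->
  on_sphere C p ->
  dot w p = 0 ->
  dot w w = C ->
  forall x : 'rV[R]_(d.+1), on_sphere C x ->
    let v := (Num.sqrt C)^-1 * asin `|dot w x| in
    ((exists2 y, Hpw C w y & geod C x y = v) /\
     (forall y, Hpw C w y -> v <= geod C x y)) /\
    (Pperp w x != 0 ->
       Hpw C w (pcirc C w x) /\
       v = (Num.sqrt C)^-1 * `|dot w (logmap C (pcirc C w x) x)|).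
Proof.
move=> C0 hp wp ww x hx v.
have w0 : dot w w != 0 by rewrite ww gt_eqF.
set a := dot w x; set s := Num.sqrt (1 - a ^+ 2).
have a1 : `|a| <= 1.
  apply: le_trans (normr_dot_le w x) _.
  by rewrite (enorm_sphere C0 hx) /enorm ww mulfV // gt_eqF ?sqrtr_gt0.
have hs : Num.sqrt C * enorm (Pperp w x) = s := sqrtC_enorm_Pperp C0 hx ww.
have hv : v = (Num.sqrt C)^-1 * acos s by rewrite /v asin_norm.
split; [split|].
- have [P0|P0] := eqVneq (Pperp w x) 0.
    exists p; first by split.
    rewrite hv /geod -(dot_Pperp_orth x wp) P0 dot0l mulr0.
    by rewrite -hs P0 /enorm dot0l sqrtr0 mulr0.
  exists (pcirc C w x); first exact: pcirc_Hpw.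
  by rewrite hv /geod dot_pcirc // hs.
- move=> y [hy wy]; rewrite hv /geod ler_wpM2l ?invr_ge0 ?sqrtr_ge0 //.
  have /[!ler_norml] Cxy := normr_dot_sphere C0 hx hy.
  by rewrite ler_acos ?sqrt1B_sqr_itv // -hs dot_orth_le_enorm_Pperp.
- move=> P0; have [_ wq] := pcirc_Hpw C0 w0 P0; split; first exact: pcirc_Hpw.
  rewrite hv dot_logmap // dot_pcirc // hs sin_acos_sqrt1B_sqr // -/a.
  have [a0|a0] := eqVneq a 0.
    (* theta = 0 here, and the log map's factor theta / sin theta is 0 / 0 = 0 *)
    by rewrite /s a0 expr2 !mulr0 normr0 subr0 sqrtr1 acos1.
  rewrite normrM normf_div normr_id divfK ?normr_eq0 //.
  by rewrite ger0_norm // acos_ge0 // sqrt1B_sqr_itv.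
Qed.
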